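(* Let $S\cdot I = (C,O,\Sigma)\cdot(T,R,W)$ be a well-formed instrumented notebook state with $n$ cells such that $T_i = \textsc{clean}$ for all $i = 1,\dots,n$. Then the notebook state $(C,O,\Sigma)$ is reproducible, i.e. there exists a store $\Sigma'$ such that the top-to-bottom execution judgment $C \Downarrow O \cdot \Sigma'$ holds.
   Context: Locations and stores. $\mathrm{Loc}$ is a set of locations (top-level variable names, and DataFrame columns $d.c$ with $d$ an immutable DataFrame address and $c$ a column name); $\mathrm{Val}$ is a set of values; a store is a map $\Sigma:\mathrm{Loc}\to\mathrm{Val}$, and $\emptyset$ denotes the empty store. Code and outputs range over unspecified sets. Cell evaluation. Standard cell evaluation is a given relation (a black box modelling the language runtime) $c;\Sigma \Downarrow o\cdot\Sigma'$: executing code $c$ in store $\Sigma$ produces output $o$ and resulting store $\Sigma'$. Instrumented cell evaluation $c;\Sigma\Downarrow o\cdot\Sigma'\cdot r\cdot w$ holds when $c;\Sigma\Downarrow o\cdot\Sigma'$, $r\subseteq\mathrm{Loc}$ is the set of locations of $\Sigma$ read during evaluation of $c$, and $w\subseteq\mathrm{Loc}$ is the set of locations where $\Sigma'$ is updated from $\Sigma$. Notation. For a sequence of sets $W = W_1,\dots,W_n$, $\bigcup W_{i..j} = W_i\cup\dots\cup W_j$ (empty if $i>j$). Notebook states. A notebook state is $(C,O,\Sigma)$ with cell codes $C = C_1,\dots,C_n$, outputs $O = O_1,\dots,O_n$, and current store $\Sigma$. An instrumentation is $(T,R,W)$ with tags $T_i\in\{\textsc{clean},\textsc{stale}\}$,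 read sets $R_i\subseteq\mathrm{Loc}$ and write sets $W_i\subseteq\mathrm{Loc}$. Top-to-bottom execution. $C\Downarrow O\cdot\Sigma'$ holds iff there are stores $\Sigma_0 = \emptyset,\Sigma_1,\dots,\Sigma_n = \Sigma'$ with $C_k;\Sigma_{k-1}\Downarrow O_k\cdot\Sigma_k$ (standard evaluation) for each $k = 1,\dots,n$. A notebook state $(C,O,\Sigma)$ is reproducible if there exists $\Sigma'$ with $C\Downarrow O\cdot\Sigma'$. Rerun consistency. $R$ and $W$ are rerun consistent for cell $i$ if: $R_i\cap W_i=\emptyset$; $R_i\subseteq\bigcup W_{1..i-1}$; $R_i\cap\bigcup W_{i+1..n}=\emptyset$; and $W_i\cap\bigcup R_{1..i-1}=\emptyset$. Well-formedness. $(C,O,\Sigma)\cdot(T,R,W)$ is well-formed if for every $i$ with $T_i=\textsc{clean}$ there exists a store $\Sigma'$ such that (1) $C_i;\Sigma\Downarrow O_i\cdot\Sigma'\cdot R_i\cdot W_i$; (2) $\Sigma$ and $\Sigma'$ agree on every location not in $\bigcup W_{i+1..n}$; (3) $R$ and $W$ are rerun consistent for $i$. *)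

From Stdlib Require Import Arith Lia.

Set Implicit Arguments.

(* Abstract sets of locations and values; a store is a partial map
   Loc -> option Val (None = unbound); the empty store maps everything to None. *)
Definition store (Loc Val : Type) := Loc -> option Val.
Definition empty_store {Loc Val : Type} : store Loc Val := fun _ => None.
Definition lset (Loc : Type) := Loc -> Prop.

Definition agree_on {Loc Val : Type} (A : lset Loc) (s1 s2 : store Loc Val) : Prop :=
  forall l, A l -> s1 l = s2 l.

Definition agree_off {Loc Val : Type} (A : lset Loc) (s1 s2 : store Loc Val) : Prop :=
  forall l, ~ A l -> s1 l = s2 l.

(* The fields [ieval_*] express
   what it means for r to be the set of locations read and w the set of
   locations updated. *)
Record language (Loc Val : Type) := Language {
  code : Type;
  output : Type;
  eval : code -> store Loc Val -> output -> store Loc Val -> Prop;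
  ieval : code -> store Loc Val -> output -> store Loc Val ->
          lset Loc -> lset Loc -> Prop;
  ieval_eval : forall c s o s' r w, ieval c s o s' r w -> eval c s o s';
  ieval_writes : forall c s o s' r w, ieval c s o s' r w -> agree_off w s s';
  ieval_reads : forall c s o s' r w s1, ieval c s o s' r w -> agree_on r s s1 ->
     exists s1', ieval c s1 o s1' r w /\ agree_on w s' s1' /\ agree_off w s1 s1'
}.

Arguments eval {Loc Val} l _ _ _ _.
Arguments ieval {Loc Val} l _ _ _ _ _ _.
Arguments code {Loc Val} l.
Arguments output {Loc Val} l.

Definition bigU {Loc : Type} (W : nat -> lset Loc) (i j : nat) : lset Loc :=
  fun l => exists k, i <= k <= j /\ W k l.

Inductive tag := Clean | Stale.

Section Notebook.
Context {Loc Val : Type} (L : language Loc Val).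

Definition top_down (n : nat) (C : nat -> code L) (O : nat -> output L)
  (s' : store Loc Val) : Prop :=
  exists S : nat -> store Loc Val,
    S 0 = empty_store /\ S n = s' /\
    (forall k, 1 <= k <= n -> eval L (C k) (S (k - 1)) (O k) (S k)).

Definition reproducible (n : nat) (C : nat -> code L) (O : nat -> output L)
  (s : store Loc Val) : Prop :=
  exists s', top_down n C O s'.

Definition rerun_consistent (n : nat) (R W : nat -> lset Loc) (i : nat) : Prop :=
  (forall l, R i l -> W i l -> False) /\
  (forall l, R i l -> bigU W 1 (i - 1) l) /\
  (forall l, R i l -> bigU W (i + 1) n l -> False) /\
  (forall l, W i l -> bigU R 1 (i - 1) l -> False).

Definition well_formed (n : nat) (C : nat -> code L) (O : nat -> output L)
  (s : store Loc Val) (T : nat -> tag) (R W : nat -> lset Loc) : Prop :=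
  forall i, 1 <= i <= n -> T i = Clean ->
    exists s', ieval L (C i) s (O i) s' (R i) (W i) /\
               agree_off (bigU W (i + 1) n) s s' /\
               rerun_consistent n R W i.

End Notebook.

From Stdlib Require Import Arith Lia Classical.

(* Replay the cells top to bottom from the empty store.  Invariant after cell
   m: the replay store agrees with Σ on every location whose last writer is one
   of the cells 1..m.  By rerun consistency a clean cell m+1 reads only such
   locations, so read-determinism makes it produce O_{m+1} again; its writes
   then agree with Σ because Σ differs from its post-store only on locations
   written by later cells. *)

Lemma bigU_empty {Loc : Type} (W : nat -> lset Loc) i j l :
  j < i -> ~ bigU W i j l.
Proof. intros Hji [k [Hk _]]; lia. Qed.

Lemma bigU_first {Loc : Type} (W : nat -> lset Loc) i j l :
  bigU W i j l -> W i l \/ bigU W (S i) j l.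
Proof.
  intros [k [Hk Hw]].
  destruct (Nat.eq_dec k i) as [->|Hki]; [left; exact Hw|].
  right; exists k; split; [lia|exact Hw].
Qed.

Lemma bigU_last {Loc : Type} (W : nat -> lset Loc) i j l :
  bigU W i (S j) l -> bigU W i j l \/ W (S j) l.
Proof.
  intros [k [Hk Hw]].
  destruct (Nat.eq_dec k (S j)) as [->|Hkj]; [right; exact Hw|].
  left; exists k; split; [lia|exact Hw].
Qed.

Section Replay.

Context {Loc Val : Type} (L : language Loc Val) (n : nat)
  (C : nat -> code L) (O : nat -> output L) (R W : nat -> lset Loc).

Definition settled (m : nat) : lset Loc :=
  fun l => bigU W 1 m l /\ ~ bigU W (S m) n l.

Lemma settled_0 l : ~ settled 0 l.
Proof. intros [Hw _]; exact (bigU_empty W 1 0 l ltac:(lia) Hw). Qed.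

Lemma settled_S m l :
  settled (S m) l ->
  (W (S m) l /\ ~ bigU W (S (S m)) n l) \/ (~ W (S m) l /\ settled m l).
Proof.
  intros [Hw Hlater].
  destruct (classic (W (S m) l)) as [Hcur|Hcur]; [left; tauto|right].
  split; [exact Hcur|split].
  - destruct (bigU_last W 1 m l Hw); tauto.
  - intros Hfrom; destruct (bigU_first W (S m) n l Hfrom); tauto.
Qed.

Lemma rerun_consistent_reads_settled m l :
  rerun_consistent n R W (S m) -> R (S m) l -> settled m l.
Proof.
  intros [Hdisj [Hearlier [Hlater _]]] Hr.
  split.
  - specialize (Hearlier l Hr); simpl in Hearlier; rewrite Nat.sub_0_r in Hearlier.
    exact Hearlier.
  - intros Hfrom; destruct (bigU_first W (S m) n l Hfrom) as [Hw|Hw].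
    + exact (Hdisj l Hr Hw).
    + apply (Hlater l Hr); rewrite Nat.add_1_r; exact Hw.
Qed.

Lemma clean_cell_replay m (s s' Sm : store Loc Val) :
  ieval L (C (S m)) s (O (S m)) s' (R (S m)) (W (S m)) ->
  agree_off (bigU W (S m + 1) n) s s' ->
  rerun_consistent n R W (S m) ->
  agree_on (settled m) s Sm ->
  exists s1, eval L (C (S m)) Sm (O (S m)) s1 /\ agree_on (settled (S m)) s s1.
Proof.
  intros Hrun Hpost Hcons Hsettled.
  rewrite Nat.add_1_r in Hpost.
  assert (Hreads : agree_on (R (S m)) s Sm).
  { intros l Hr; apply Hsettled; exact (rerun_consistent_reads_settled m l Hcons Hr). }
  destruct (ieval_reads L _ _ _ _ Hrun Hreads) as [s1 [Hrun1 [Hwritten Hkept]]].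
  exists s1; split; [exact (ieval_eval L _ _ _ _ _ _ Hrun1)|].
  intros l Hl; destruct (settled_S m l Hl) as [[Hw Hlater] | [Hw Hold]].
  - rewrite <- (Hwritten l Hw); exact (Hpost l Hlater).
  - rewrite <- (Hkept l Hw); exact (Hsettled l Hold).
Qed.

Definition runs_upto (m : nat) (St : nat -> store Loc Val) : Prop :=
  St 0 = empty_store /\
  forall k, 1 <= k <= m -> eval L (C k) (St (k - 1)) (O k) (St k).

Lemma runs_upto_snoc m St s1 :
  runs_upto m St -> eval L (C (S m)) (St m) (O (S m)) s1 ->
  runs_upto (S m) (fun k => if k <=? m then St k else s1).
Proof.
  intros [H0 Hcells] Hlast; split; [exact H0|].
  intros k Hk.
  destruct (Nat.eq_dec k (S m)) as [->|Hkm].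
  - replace (S m - 1) with m by lia.
    rewrite Nat.leb_refl, (proj2 (Nat.leb_gt (S m) m) (Nat.lt_succ_diag_r m)).
    exact Hlast.
  - rewrite (proj2 (Nat.leb_le k m)), (proj2 (Nat.leb_le (k - 1) m)) by lia.
    apply Hcells; lia.
Qed.

Lemma replay_prefix (s : store Loc Val) (T : nat -> tag) :
  well_formed L n C O s T R W ->
  (forall i, 1 <= i <= n -> T i = Clean) ->
  forall m, m <= n ->
  exists St, runs_upto m St /\ agree_on (settled m) s (St m).
Proof.
  intros Hwf Hall_clean m; induction m as [|m IH]; intros Hm.
  - exists (fun _ => empty_store); split.
    + split; [reflexivity | intros k Hk; lia].
    + intros l Hl; destruct (settled_0 l Hl).
  - destruct (IH ltac:(lia)) as [St [Hruns Hsettled]].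
    destruct (Hwf (S m) ltac:(lia) (Hall_clean (S m) ltac:(lia)))
      as [s' [Hrun [Hpost Hcons]]].
    destruct (clean_cell_replay m s s' (St m) Hrun Hpost Hcons Hsettled)
      as [s1 [Heval Hsettled1]].
    exists (fun k => if k <=? m then St k else s1); split.
    + exact (runs_upto_snoc m St s1 Hruns Heval).
    + rewrite (proj2 (Nat.leb_gt (S m) m) (Nat.lt_succ_diag_r m)); exact Hsettled1.
Qed.

End Replay.

Theorem theorem2 (Loc Val : Type) (L : language Loc Val) (n : nat)
  (C : nat -> code L) (O : nat -> output L) (s : store Loc Val)
  (T : nat -> tag) (R W : nat -> lset Loc) :
  well_formed L n C O s T R W ->
  (forall i, 1 <= i <= n -> T i = Clean) ->
  reproducible L n C O s.
Proof.
  intros Hwf Hall_clean.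
  destruct (replay_prefix L n C O R W s T Hwf Hall_clean n (le_n n))
    as [St [[H0 Hcells] _]].
  exists (St n), St; auto.
Qed.
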